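(* For every $n\ge0$ there is a push-out diagram of sets $$\begin{array}{ccc}\mathrm{Hom}(\mathbb{Z}^n,\mathbb{Z}/2) & \longrightarrow & \mathrm{Hom}(\mathbb{Z}^n,(\mathbb{Z}/2)^2)/\Sigma_3\\ \downarrow && \downarrow\\ \ast & \longrightarrow & \pi_0\,\mathrm{Hom}(\mathbb{Z}^n,SO(3))\end{array}$$ where $\Sigma_3$ acts on $(\mathbb{Z}/2)^2$ by permuting its three non-trivial elements, the top map is induced by one of the inclusions $\mathbb{Z}/2\subset(\mathbb{Z}/2)^2$ followed by the quotient, the right map is induced by an embedding $(\mathbb{Z}/2)^2\cong\bar Q\subset SO(3)$, and the bottom map picks out the component of the trivial homomorphism.
   Context: $\mathrm{Hom}(\mathbb{Z}^n,SO(3))$ is the space of $n$-tuples of pairwise commuting elements of $SO(3)$ (subspace of $SO(3)^n$), and $\pi_0$ is its set of path components. $\bar Q\cong(\mathbb{Z}/2)^2$ is the image in $SO(3)$ of the quaternion group $Q=\{\pm1,\pm\mathbf{i},\pm\mathbf{j},\pm\mathbf{k}\}\subset SU(2)$ under the double cover $R:SU(2)\to SO(3)$ (e.g. the diagonal matrices with entries $\pm1$), and the subgroup $\mathbb{Z}/2$ is $\bar Q\cap\bar T$ for a maximal torus $\bar T$ of $SO(3)$. *)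

From Stdlib Require Import Reals.
From Stdlib Require Fin.
Open Scope R_scope.

Definition idx := Fin.t 3.
Definition i0 : idx := Fin.F1.
Definition i1 : idx := Fin.FS Fin.F1.
Definition i2 : idx := Fin.FS (Fin.FS Fin.F1).

Definition Mat := idx -> idx -> R.

Definition mmul (A B : Mat) : Mat :=
  fun i j => A i i0 * B i0 j + A i i1 * B i1 j + A i i2 * B i2 j.
Definition mtr (A : Mat) : Mat := fun i j => A j i.
Definition mid : Mat := fun i j => if Fin.eq_dec i j then 1 else 0.
Definition meq (A B : Mat) : Prop := forall i j, A i j = B i j.
Definition mdet (A : Mat) : R :=
    A i0 i0 * (A i1 i1 * A i2 i2 - A i1 i2 * A i2 i1)
  - A i0 i1 * (A i1 i0 * A i2 i2 - A i1 i2 * A i2 i0)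
  + A i0 i2 * (A i1 i0 * A i2 i1 - A i1 i1 * A i2 i0).

Definition in_SO3 (A : Mat) : Prop := meq (mmul (mtr A) A) mid /\ mdet A = 1.

(* Hom(Z^n, SO(3)) = n-tuples of pairwise commuting elements of SO(3) *)
Definition in_HomSO3 (n : nat) (x : Fin.t n -> Mat) : Prop :=
  (forall k, in_SO3 (x k)) /\
  (forall k l, meq (mmul (x k) (x l)) (mmul (x l) (x k))).

(* Path-connectedness inside Hom(Z^n,SO(3)) (subspace topology of R^(9n)):
   a path is a map R -> tuples, continuous in every entry, lying in
   Hom(Z^n,SO(3)) for t in [0,1], with the given endpoints. *)
Definition path_conn (n : nat) (x y : Fin.t n -> Mat) : Prop :=
  exists g : R -> Fin.t n -> Mat,
    (forall k i j, continuity (fun t => g t k i j)) /\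
    (forall t, 0 <= t <= 1 -> in_HomSO3 n (g t)) /\
    (forall k, meq (g 0 k) (x k)) /\ (forall k, meq (g 1 k) (y k)).

Definition trivHom (n : nat) : Fin.t n -> Mat := fun _ => mid.

(* Z/2 = bool (addition xorb); (Z/2)^2 = bool * bool.
   Hom(Z^n, A) for A = Z/2, (Z/2)^2 is identified with A^n (images of the
   standard generators). *)
Definition V := (bool * bool)%type.
Definition V0 : V := (false, false).

(* Sigma_3: permutations of (Z/2)^2 fixing 0, i.e. permutations of its three
   non-trivial elements (injective = bijective on a finite set). *)
Definition in_Sigma3 (s : V -> V) : Prop :=
  (forall v w, s v = s w -> v = w) /\ s V0 = V0.

Definition sigma_orbit (n : nat) (b b' : Fin.t n -> V) : Prop :=
  exists s, in_Sigma3 s /\ forall k, b' k = s (b k).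

Definition incl (a : bool) : V := (a, false).

Definition sgn (b : bool) : R := if b then -1 else 1.
Definition embQ (v : V) : Mat :=
  fun i j =>
    if Fin.eq_dec i j then
      (if Fin.eq_dec i i0 then sgn (fst v)
       else if Fin.eq_dec i i1 then sgn (snd v)
       else sgn (xorb (fst v) (snd v)))
    else 0.

Definition topMap (n : nat) (a : Fin.t n -> bool) : Fin.t n -> V :=
  fun k => incl (a k).
Definition rightMap (n : nat) (b : Fin.t n -> V) : Fin.t n -> Mat :=
  fun k => embQ (b k).

(* Commuting rotations lift to unit quaternions that commute or anticommute.  If all lifts
   of a tuple commute, shrinking them linearly to 1 connects the tuple to the trivial
   homomorphism.  If two of them anticommute, they are orthogonal pure quaternions; rotating
   them to i and j moves every lift into the quaternion group, i.e. moves the tuple into the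
   image of Hom(Z^n, Qbar).
   For commuting rotations A, B the number tr A + tr B + tr AB is -3 when A, B are distinct
   half-turns about perpendicular axes and at least -2 otherwise, so by the intermediate
   value theorem the set of such pairs in a tuple is constant on path components.  On
   Hom(Z^n, (Z/2)^2) this set determines the Sigma_3-orbit when it is nonempty, and it is
   empty exactly on the orbits of the image of Hom(Z^n, Z/2): this is the push-out. *)

From Stdlib Require Import Reals Lra Psatz Classical ClassicalEpsilon Relations.
From Stdlib Require Fin.
Open Scope R_scope.

Lemma idx_cases (i : idx) : i = i0 \/ i = i1 \/ i = i2.
Proof.
  pattern i; apply Fin.caseS'; [now left|].
  intro p; pattern p; apply Fin.caseS'; [now right; left|].
  intro p'; pattern p'; apply Fin.caseS'; [now right; right|].
  intro p''; apply (Fin.case0 (fun _ => _) p'').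
Qed.

Ltac idx_cases i := let H := fresh in destruct (idx_cases i) as [H|[H|H]]; subst i.

Definition mat3 (a b c d e f g h k : R) : Mat :=
  fun i j => match proj1_sig (Fin.to_nat i), proj1_sig (Fin.to_nat j) with
  | 0%nat, 0%nat => a | 0%nat, 1%nat => b | 0%nat, _ => c
  | 1%nat, 0%nat => d | 1%nat, 1%nat => e | 1%nat, _ => f
  | _, 0%nat => g | _, 1%nat => h | _, _ => k end.

Lemma meq_of_entries (A B : Mat) :
  A i0 i0 = B i0 i0 -> A i0 i1 = B i0 i1 -> A i0 i2 = B i0 i2 ->
  A i1 i0 = B i1 i0 -> A i1 i1 = B i1 i1 -> A i1 i2 = B i1 i2 ->
  A i2 i0 = B i2 i0 -> A i2 i1 = B i2 i1 -> A i2 i2 = B i2 i2 -> meq A B.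
Proof. intros * ? ? ? ? ? ? ? ? ? i j; idx_cases i; idx_cases j; assumption. Qed.

Lemma meq_sym (A B : Mat) : meq A B -> meq B A.
Proof. intros H i j; symmetry; apply H. Qed.

Lemma meq_trans (A B C : Mat) : meq A B -> meq B C -> meq A C.
Proof. intros H1 H2 i j; rewrite H1; apply H2. Qed.

Lemma mmul_meq (A A' B B' : Mat) : meq A A' -> meq B B' -> meq (mmul A B) (mmul A' B').
Proof. intros HA HB i j; unfold mmul; rewrite !HA, !HB; reflexivity. Qed.

Lemma in_SO3_meq (A B : Mat) : meq A B -> in_SO3 A -> in_SO3 B.
Proof.
  intros H [HO Hd]; split.
  - intros i j; rewrite <- HO; unfold mmul, mtr; rewrite !H; reflexivity.
  - rewrite <- Hd; unfold mdet; rewrite !H; reflexivity.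
Qed.

Lemma commute_meq (A A' B B' : Mat) : meq A A' -> meq B B' ->
  meq (mmul A B) (mmul B A) -> meq (mmul A' B') (mmul B' A').
Proof.
  intros HA HB H.
  eapply meq_trans; [apply mmul_meq; apply meq_sym; eassumption|].
  eapply meq_trans; [exact H|]. apply mmul_meq; assumption.
Qed.

(** * Quaternions and the double cover SU(2) -> SO(3) *)

Record quat := Quat { qw : R; qx : R; qy : R; qz : R }.

Lemma quat_ext (p q : quat) :
  qw p = qw q -> qx p = qx q -> qy p = qy q -> qz p = qz q -> p = q.
Proof. destruct p, q; simpl; intros; subst; reflexivity. Qed.

Definition qmul (p q : quat) : quat :=
  Quat (qw p * qw q - qx p * qx q - qy p * qy q - qz p * qz q)
       (qw p * qx q + qx p * qw q + qy p * qz q - qz p * qy q)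
       (qw p * qy q - qx p * qz q + qy p * qw q + qz p * qx q)
       (qw p * qz q + qx p * qy q - qy p * qx q + qz p * qw q).
Definition qconj (q : quat) : quat := Quat (qw q) (- qx q) (- qy q) (- qz q).
Definition qopp (q : quat) : quat := Quat (- qw q) (- qx q) (- qy q) (- qz q).
Definition qscale (c : R) (q : quat) : quat := Quat (c * qw q) (c * qx q) (c * qy q) (c * qz q).
Definition qnorm2 (q : quat) : R := qw q * qw q + qx q * qx q + qy q * qy q + qz q * qz q.
Definition qone : quat := Quat 1 0 0 0.
Definition qI : quat := Quat 0 1 0 0.
Definition qJ : quat := Quat 0 0 1 0.
Definition qK : quat := Quat 0 0 0 1.

Ltac quat_simpl :=
  unfold qmul, qconj, qopp, qscale, qnorm2, qone, qI, qJ, qK in *; cbn [qw qx qy qz] in *.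
Ltac quat_ring := apply quat_ext; quat_simpl; ring.

Lemma qmul_assoc (p q r : quat) : qmul (qmul p q) r = qmul p (qmul q r).
Proof. quat_ring. Qed.

Lemma qnorm2_mul (p q : quat) : qnorm2 (qmul p q) = qnorm2 p * qnorm2 q.
Proof. quat_simpl; ring. Qed.

Lemma qnorm2_conj (q : quat) : qnorm2 (qconj q) = qnorm2 q.
Proof. quat_simpl; ring. Qed.

Lemma qnorm2_opp (q : quat) : qnorm2 (qopp q) = qnorm2 q.
Proof. quat_simpl; ring. Qed.

Lemma qnorm2_ge0 (q : quat) : 0 <= qnorm2 q.
Proof. quat_simpl; nra. Qed.

Lemma qnorm2_eq0 (q : quat) : qnorm2 q = 0 -> q = Quat 0 0 0 0.
Proof.
  destruct q as [a b c d]; quat_simpl; intro H.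
  assert (a = 0) by nra; assert (b = 0) by nra; assert (c = 0) by nra; assert (d = 0) by nra.
  subst; reflexivity.
Qed.

Lemma qconj_mul_l (q : quat) : qmul (qconj q) q = qscale (qnorm2 q) qone.
Proof. quat_ring. Qed.

Lemma qconj_mul_r (q : quat) : qmul q (qconj q) = qscale (qnorm2 q) qone.
Proof. quat_ring. Qed.

Definition commute_up_to_sign (p q : quat) : Prop :=
  qmul p q = qmul q p \/ qmul p q = qopp (qmul q p).

(* The matrix of v |-> q v q^*, on the pure quaternions v; it is |q|^2 times a rotation. *)
Definition qmat (q : quat) : Mat :=
  let w := qw q in let x := qx q in let y := qy q in let z := qz q in
  mat3 (w*w+x*x-y*y-z*z) (2*(x*y - w*z)) (2*(x*z + w*y))
       (2*(x*y + w*z)) (w*w-x*x+y*y-z*z) (2*(y*z - w*x))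
       (2*(x*z - w*y)) (2*(y*z + w*x)) (w*w-x*x-y*y+z*z).

Definition qrot (q : quat) : Mat := fun i j => qmat q i j / qnorm2 q.

Ltac mat_entries :=
  intros i j; idx_cases i; idx_cases j;
  unfold qmat, mat3, mmul, mtr, mid in *; quat_simpl; cbn.

Lemma qmat_mul (p q : quat) : meq (mmul (qmat p) (qmat q)) (qmat (qmul p q)).
Proof. mat_entries; ring. Qed.

Lemma qmat_opp (q : quat) : meq (qmat (qopp q)) (qmat q).
Proof. mat_entries; ring. Qed.

Lemma qmat_scale (c : R) (q : quat) : meq (qmat (qscale c q)) (fun i j => c * c * qmat q i j).
Proof. mat_entries; ring. Qed.

Lemma qmat_conj (q : quat) : meq (qmat (qconj q)) (mtr (qmat q)).
Proof. mat_entries; ring. Qed.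

Lemma qmat_one : meq (qmat qone) mid.
Proof. mat_entries; ring. Qed.

Lemma qrot_unit (q : quat) : qnorm2 q = 1 -> meq (qrot q) (qmat q).
Proof. intros H i j; unfold qrot; rewrite H; field. Qed.

Lemma qrot_mul (p q : quat) : qnorm2 p <> 0 -> qnorm2 q <> 0 ->
  forall i j, mmul (qrot p) (qrot q) i j = qmat (qmul p q) i j / (qnorm2 p * qnorm2 q).
Proof.
  intros Hp Hq i j; rewrite <- (qmat_mul p q i j); unfold mmul, qrot; field; auto.
Qed.

Lemma qrot_commute (p q : quat) : qnorm2 p <> 0 -> qnorm2 q <> 0 ->
  commute_up_to_sign p q -> meq (mmul (qrot p) (qrot q)) (mmul (qrot q) (qrot p)).
Proof.
  intros Hp Hq [H|H] i j; rewrite !qrot_mul by auto; rewrite H;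
    [|rewrite qmat_opp]; f_equal; ring.
Qed.

Lemma qrot_SO3 (q : quat) : qnorm2 q <> 0 -> in_SO3 (qrot q).
Proof.
  intro H; split.
  - mat_entries; unfold qrot, qmat, mat3, qnorm2 in *; cbn; field; auto.
  - unfold mdet, qrot, qmat, mat3, qnorm2 in *; cbn; field; auto.
Qed.

Lemma qrot_scale (c : R) (q : quat) : c <> 0 -> qnorm2 q <> 0 -> meq (qrot (qscale c q)) (qrot q).
Proof.
  intros Hc Hq i j; unfold qrot; rewrite qmat_scale.
  replace (qnorm2 (qscale c q)) with (c * c * qnorm2 q) by (quat_simpl; ring).
  field; auto.
Qed.

Lemma qrot_opp (q : quat) : meq (qrot (qopp q)) (qrot q).
Proof. intros i j; unfold qrot; rewrite qmat_opp, qnorm2_opp; reflexivity. Qed.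

Definition qconjug (s q : quat) : quat := qmul (qmul s q) (qconj s).

Lemma qconjug_one (q : quat) : qconjug qone q = q.
Proof. unfold qconjug; quat_ring. Qed.

Lemma qnorm2_qconjug (s q : quat) : qnorm2 (qconjug s q) = qnorm2 s * qnorm2 s * qnorm2 q.
Proof. unfold qconjug; quat_simpl; ring. Qed.

Lemma qconjug_mul (s a b : quat) :
  qmul (qconjug s a) (qconjug s b) = qscale (qnorm2 s) (qconjug s (qmul a b)).
Proof. unfold qconjug; quat_ring. Qed.

Lemma qconjug_opp (s a : quat) : qconjug s (qopp a) = qopp (qconjug s a).
Proof. unfold qconjug; quat_ring. Qed.

Lemma qconjug_commute (s a b : quat) :
  commute_up_to_sign a b -> commute_up_to_sign (qconjug s a) (qconjug s b).
Proof.
  intros [H|H]; unfold commute_up_to_sign; rewrite !qconjug_mul, H; [now left|right].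
  rewrite qconjug_opp; quat_ring.
Qed.

Lemma qconjug_vector (r a : quat) :
  qconjug r a = Quat (qnorm2 r * qw a)
     (qmat r i0 i0 * qx a + qmat r i0 i1 * qy a + qmat r i0 i2 * qz a)
     (qmat r i1 i0 * qx a + qmat r i1 i1 * qy a + qmat r i1 i2 * qz a)
     (qmat r i2 i0 * qx a + qmat r i2 i1 * qy a + qmat r i2 i2 * qz a).
Proof. apply quat_ext; unfold qconjug, qmat, mat3; quat_simpl; cbn; ring. Qed.

(** * Lifting commuting tuples to unit quaternions *)

Ltac mul_by H c := let F := fresh "F" in pose proof (f_equal (fun u => u * c) H) as F; cbv beta in F.

Lemma SO3_cofactor (a11 a12 a13 a21 a22 a23 a31 a32 a33 : R) :
  a11*a11+a21*a21+a31*a31 = 1 -> a12*a12+a22*a22+a32*a32 = 1 -> a13*a13+a23*a23+a33*a33 = 1 ->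
  a11*a12+a21*a22+a31*a32 = 0 -> a11*a13+a21*a23+a31*a33 = 0 -> a12*a13+a22*a23+a32*a33 = 0 ->
  a11 * (a22 * a33 - a23 * a32) - a12 * (a21 * a33 - a23 * a31) + a13 * (a21 * a32 - a22 * a31) = 1 ->
  a11 = a22*a33-a23*a32 /\ a21 = a13*a32-a12*a33 /\ a31 = a12*a23-a13*a22 /\
  a12 = a23*a31-a21*a33 /\ a22 = a11*a33-a13*a31 /\ a32 = a13*a21-a11*a23 /\
  a13 = a21*a32-a22*a31 /\ a23 = a12*a31-a11*a32 /\ a33 = a11*a22-a12*a21.
Proof.
  intros P11 P22 P33 P12 P13 P23 Pd.
  repeat split.
  - mul_by P11 (a22*a33-a23*a32); mul_by P12 (a23*a31-a21*a33); mul_by P13 (a21*a32-a22*a31); mul_by Pd a11; lra.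
  - mul_by P11 (a13*a32-a12*a33); mul_by P12 (a11*a33-a13*a31); mul_by P13 (a12*a31-a11*a32); mul_by Pd a21; lra.
  - mul_by P11 (a12*a23-a13*a22); mul_by P12 (a13*a21-a11*a23); mul_by P13 (a11*a22-a12*a21); mul_by Pd a31; lra.
  - mul_by P12 (a22*a33-a23*a32); mul_by P22 (a23*a31-a21*a33); mul_by P23 (a21*a32-a22*a31); mul_by Pd a12; lra.
  - mul_by P12 (a13*a32-a12*a33); mul_by P22 (a11*a33-a13*a31); mul_by P23 (a12*a31-a11*a32); mul_by Pd a22; lra.
  - mul_by P12 (a12*a23-a13*a22); mul_by P22 (a13*a21-a11*a23); mul_by P23 (a11*a22-a12*a21); mul_by Pd a32; lra.
  - mul_by P13 (a22*a33-a23*a32); mul_by P23 (a23*a31-a21*a33); mul_by P33 (a21*a32-a22*a31); mul_by Pd a13; lra.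
  - mul_by P13 (a13*a32-a12*a33); mul_by P23 (a11*a33-a13*a31); mul_by P33 (a12*a31-a11*a32); mul_by Pd a23; lra.
  - mul_by P13 (a12*a23-a13*a22); mul_by P23 (a13*a21-a11*a23); mul_by P33 (a11*a22-a12*a21); mul_by Pd a33; lra.
Qed.

Ltac shepperd_case D w x y z :=
  exists (Quat w x y z);
  assert (HN : qnorm2 (Quat w x y z) = 4 * D) by (unfold qnorm2; cbn; lra);
  split; [rewrite HN; intro; lra|];
  apply meq_of_entries; unfold qrot; rewrite HN; unfold qmat, mat3; cbn;
  match goal with |- ?X / _ = ?a => replace X with (4*D*a) by lra; field; intro; lra end.

(* Shepperd's method: the four quantities 1 +- a11 +- a22 +- a33 sum to 4, so one is >= 1,
   and it is 4 w^2, 4 x^2, 4 y^2 or 4 z^2 for the quaternion q with qmat q = 4 D A,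
   whose other coordinates are then read off from sums and differences of entries. *)
Lemma shepperd (a11 a12 a13 a21 a22 a23 a31 a32 a33 : R) :
  a11*a11+a21*a21+a31*a31 = 1 -> a12*a12+a22*a22+a32*a32 = 1 -> a13*a13+a23*a23+a33*a33 = 1 ->
  a11*a12+a21*a22+a31*a32 = 0 -> a11*a13+a21*a23+a31*a33 = 0 -> a12*a13+a22*a23+a32*a33 = 0 ->
  a11 * (a22 * a33 - a23 * a32) - a12 * (a21 * a33 - a23 * a31) + a13 * (a21 * a32 - a22 * a31) = 1 ->
  exists q, qnorm2 q <> 0 /\ meq (qrot q) (mat3 a11 a12 a13 a21 a22 a23 a31 a32 a33).
Proof.
  intros P11 P22 P33 P12 P13 P23 Pd.
  destruct (SO3_cofactor a11 a12 a13 a21 a22 a23 a31 a32 a33) as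
      (C11 & C21 & C31 & C12 & C22 & C32 & C13 & C23 & C33); auto.
  assert (R11 : a11*a11+a12*a12+a13*a13 = 1) by (mul_by C11 a11; mul_by C12 a12; mul_by C13 a13; lra).
  assert (R22 : a21*a21+a22*a22+a23*a23 = 1) by (mul_by C21 a21; mul_by C22 a22; mul_by C23 a23; lra).
  assert (R33 : a31*a31+a32*a32+a33*a33 = 1) by (mul_by C31 a31; mul_by C32 a32; mul_by C33 a33; lra).
  assert (R12 : a11*a21+a12*a22+a13*a23 = 0) by (mul_by C21 a11; mul_by C22 a12; mul_by C23 a13; lra).
  assert (R13 : a11*a31+a12*a32+a13*a33 = 0) by (mul_by C31 a11; mul_by C32 a12; mul_by C33 a13; lra).
  assert (R23 : a21*a31+a22*a32+a23*a33 = 0) by (mul_by C31 a21; mul_by C32 a22; mul_by C33 a23; lra).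
  assert (HD : 1+a11+a22+a33 >= 1 \/ 1+a11-a22-a33 >= 1 \/ 1-a11+a22-a33 >= 1 \/ 1-a11-a22+a33 >= 1)
    by lra.
  destruct HD as [HD|[HD|[HD|HD]]].
  - shepperd_case (1+a11+a22+a33) (1+a11+a22+a33) (a32-a23) (a13-a31) (a21-a12).
  - shepperd_case (1+a11-a22-a33) (a32-a23) (1+a11-a22-a33) (a12+a21) (a13+a31).
  - shepperd_case (1-a11+a22-a33) (a13-a31) (a12+a21) (1-a11+a22-a33) (a23+a32).
  - shepperd_case (1-a11-a22+a33) (a21-a12) (a13+a31) (a23+a32) (1-a11-a22+a33).
Qed.

Lemma qrot_surjective (A : Mat) : in_SO3 A -> exists q, qnorm2 q <> 0 /\ meq (qrot q) A.
Proof.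
  intros [HO Hd].
  pose proof (HO i0 i0) as P11; pose proof (HO i1 i1) as P22; pose proof (HO i2 i2) as P33;
  pose proof (HO i0 i1) as P12; pose proof (HO i0 i2) as P13; pose proof (HO i1 i2) as P23.
  unfold mmul, mtr, mid, mdet in *; cbn in *.
  destruct (shepperd (A i0 i0) (A i0 i1) (A i0 i2) (A i1 i0) (A i1 i1) (A i1 i2)
                     (A i2 i0) (A i2 i1) (A i2 i2)) as [q [Hq Hm]]; try lra.
  exists q; split; [exact Hq|].
  eapply meq_trans; [exact Hm|]. apply meq_of_entries; reflexivity.
Qed.

(* The sign 0 <= qw q keeps the straight segment from 1 to q away from 0. *)
Lemma SO3_unit_lift (A : Mat) : in_SO3 A -> exists q, qnorm2 q = 1 /\ 0 <= qw q /\ meq (qmat q) A.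
Proof.
  intro HA; destruct (qrot_surjective A HA) as [q [Hq Hm]].
  assert (Hpos : 0 < qnorm2 q) by (pose proof (qnorm2_ge0 q); lra).
  set (s := sqrt (qnorm2 q)).
  assert (Hs : s * s = qnorm2 q) by (apply sqrt_sqrt; lra).
  assert (Hs0 : 0 < s) by (apply sqrt_lt_R0; lra).
  set (u := qscale (/ s) q).
  assert (Hu : qnorm2 u = 1).
  { replace (qnorm2 u) with (/ s * / s * qnorm2 q) by (unfold u; quat_simpl; ring).
    rewrite <- Hs; field; lra. }
  assert (HuA : meq (qmat u) A).
  { intros i j; rewrite <- Hm; unfold u, qrot; rewrite qmat_scale, <- Hs; field; lra. }
  clearbody u; destruct (Rle_dec 0 (qw u)) as [Hw|Hw].
  - exists u; auto.
  - exists (qopp u); repeat split.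
    + rewrite qnorm2_opp; exact Hu.
    + unfold qopp; cbn; lra.
    + eapply meq_trans; [apply qmat_opp|exact HuA].
Qed.

Lemma qmat_eq_id (p : quat) : qnorm2 p = 1 -> meq (qmat p) mid -> p = qone \/ p = qopp qone.
Proof.
  intros HN H.
  pose proof (H i0 i0) as H1; pose proof (H i1 i1) as H2; pose proof (H i2 i2) as H3.
  destruct p as [w x y z]; unfold qmat, mat3, mid in *; quat_simpl; cbn in *.
  assert (x = 0) by nra; assert (y = 0) by nra; assert (z = 0) by nra; subst.
  destruct (Rle_dec 0 w); [left|right]; apply quat_ext; cbn; nra.
Qed.

Lemma qmat_inj_up_to_sign (p q : quat) : qnorm2 p = 1 -> qnorm2 q = 1 ->
  meq (qmat p) (qmat q) -> p = q \/ p = qopp q.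
Proof.
  intros Hp Hq H.
  set (c := qmul p (qconj q)).
  assert (Hc : meq (qmat c) mid).
  { intros i j; unfold c; rewrite <- qmat_mul.
    transitivity (mmul (qmat q) (qmat (qconj q)) i j); [unfold mmul; rewrite !H; reflexivity|].
    rewrite qmat_mul, qconj_mul_r, qmat_scale, Hq, qmat_one; ring. }
  assert (HcN : qnorm2 c = 1) by (unfold c; rewrite qnorm2_mul, qnorm2_conj, Hp, Hq; ring).
  assert (Hp' : p = qmul c q).
  { unfold c; rewrite qmul_assoc, qconj_mul_l, Hq; quat_ring. }
  destruct (qmat_eq_id c HcN Hc) as [E|E]; rewrite Hp', E; [left|right]; quat_ring.
Qed.

Lemma qmat_commute_lift (p q : quat) : qnorm2 p = 1 -> qnorm2 q = 1 ->
  meq (mmul (qmat p) (qmat q)) (mmul (qmat q) (qmat p)) -> commute_up_to_sign p q.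
Proof.
  intros Hp Hq H.
  apply qmat_inj_up_to_sign; try (rewrite qnorm2_mul, Hp, Hq; ring).
  intros i j; rewrite <- !qmat_mul; apply H.
Qed.

Lemma HomSO3_lift (n : nat) (x : Fin.t n -> Mat) : in_HomSO3 n x ->
  exists q : Fin.t n -> quat,
    (forall k, qnorm2 (q k) = 1 /\ 0 <= qw (q k) /\ meq (qmat (q k)) (x k)) /\
    (forall k l, commute_up_to_sign (q k) (q l)).
Proof.
  intros [HS HC].
  destruct (choice (fun k q => qnorm2 q = 1 /\ 0 <= qw q /\ meq (qmat q) (x k))) as [q Hq].
  { intro k; exact (SO3_unit_lift (x k) (HS k)). }
  exists q; split; [exact Hq|].
  intros k l; destruct (Hq k) as [Hk [_ Mk]], (Hq l) as [Hl [_ Ml]].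
  apply qmat_commute_lift; auto.
  apply (commute_meq (x k) _ (x l)); [apply meq_sym; exact Mk|apply meq_sym; exact Ml|apply HC].
Qed.

Lemma cont_plus (f g : R -> R) : continuity f -> continuity g -> continuity (fun t => f t + g t).
Proof. apply continuity_plus. Qed.
Lemma cont_minus (f g : R -> R) : continuity f -> continuity g -> continuity (fun t => f t - g t).
Proof. apply continuity_minus. Qed.
Lemma cont_mult (f g : R -> R) : continuity f -> continuity g -> continuity (fun t => f t * g t).
Proof. apply continuity_mult. Qed.
Lemma cont_opp (f : R -> R) : continuity f -> continuity (fun t => - f t).
Proof. apply continuity_opp. Qed.
Lemma cont_const (c : R) : continuity (fun _ => c).
Proof. apply continuity_const; intros ? ?; reflexivity. Qed.
Lemma cont_id : continuity (fun t => t).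
Proof. apply derivable_continuous, derivable_id. Qed.

Ltac cont := repeat first [ assumption | apply cont_id | apply cont_const | apply cont_plus
  | apply cont_minus | apply cont_mult | apply cont_opp ].

Lemma HomSO3_of_quat (n : nat) (w : Fin.t n -> quat) (x : Fin.t n -> Mat) :
  (forall k, qnorm2 (w k) <> 0) -> (forall k l, commute_up_to_sign (w k) (w l)) ->
  (forall k, meq (qrot (w k)) (x k)) -> in_HomSO3 n x.
Proof.
  intros Hn Hc Hm; split.
  - intro k; apply (in_SO3_meq (qrot (w k))); auto; apply qrot_SO3; auto.
  - intros k l; apply (commute_meq (qrot (w k)) _ (qrot (w l))); auto.
    apply qrot_commute; auto.
Qed.

Lemma path_conn_of_quat (n : nat) (w : R -> Fin.t n -> quat) (x y : Fin.t n -> Mat) :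
  (forall k, continuity (fun t => qw (w t k))) -> (forall k, continuity (fun t => qx (w t k))) ->
  (forall k, continuity (fun t => qy (w t k))) -> (forall k, continuity (fun t => qz (w t k))) ->
  (forall t k, qnorm2 (w t k) <> 0) ->
  (forall t, 0 <= t <= 1 -> forall k l, commute_up_to_sign (w t k) (w t l)) ->
  (forall k, meq (qrot (w 0 k)) (x k)) -> (forall k, meq (qrot (w 1 k)) (y k)) ->
  path_conn n x y.
Proof.
  intros Cw Cx Cy Cz Hn Hc H0 H1.
  exists (fun t k => qrot (w t k)); split; [|split; [|split]]; auto.
  - intros k i j; specialize (Cw k); specialize (Cx k); specialize (Cy k); specialize (Cz k).
    apply continuity_div; [| |intro t; apply Hn].
    + idx_cases i; idx_cases j; unfold qmat, mat3; cbn; cont.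
    + unfold qnorm2; cont.
  - intros t Ht; apply (HomSO3_of_quat n (w t)); auto. intros k i j; reflexivity.
Qed.

Definition qsegment (r : quat) (t : R) : quat :=
  Quat ((1 - t) + t * qw r) (t * qx r) (t * qy r) (t * qz r).

Lemma qsegment0 (r : quat) : qsegment r 0 = qone.
Proof. apply quat_ext; unfold qsegment, qone; cbn; ring. Qed.

Lemma qsegment1 (r : quat) : qsegment r 1 = r.
Proof. apply quat_ext; unfold qsegment; cbn; ring. Qed.

Lemma qsegment_neq0 (r : quat) :
  qw r = 1 \/ qx r * qx r + qy r * qy r + qz r * qz r <> 0 ->
  forall t, qnorm2 (qsegment r t) <> 0.
Proof.
  intros Hr t H; apply qnorm2_eq0 in H.
  pose proof (f_equal qw H) as Ew; pose proof (f_equal qx H) as Ex;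
  pose proof (f_equal qy H) as Ey; pose proof (f_equal qz H) as Ez.
  destruct r as [a b c d]; unfold qsegment in *; cbn in *.
  destruct (Req_dec t 0) as [->|Ht]; [lra|].
  assert (b = 0) by (apply (Rmult_eq_reg_l t); lra).
  assert (c = 0) by (apply (Rmult_eq_reg_l t); lra).
  assert (d = 0) by (apply (Rmult_eq_reg_l t); lra).
  subst; destruct Hr as [->|Hv]; [lra|apply Hv; ring].
Qed.

Lemma unit_qsegment_neq0 (r : quat) : qnorm2 r = 1 -> 0 <= qw r ->
  forall t, qnorm2 (qsegment r t) <> 0.
Proof.
  intros HN Hw; apply qsegment_neq0; unfold qnorm2 in HN.
  destruct (Req_dec (qx r * qx r + qy r * qy r + qz r * qz r) 0) as [Hv|Hv]; [left|right]; nra.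
Qed.

Lemma qsegment_commute (a b : quat) (t : R) : qmul a b = qmul b a ->
  qmul (qsegment a t) (qsegment b t) = qmul (qsegment b t) (qsegment a t).
Proof.
  intro H.
  pose proof (f_equal qx H) as Hx; pose proof (f_equal qy H) as Hy; pose proof (f_equal qz H) as Hz.
  quat_simpl; apply quat_ext; unfold qsegment; cbn; nra.
Qed.

Lemma path_to_trivial (n : nat) (q : Fin.t n -> quat) (x : Fin.t n -> Mat) :
  (forall k, qnorm2 (q k) = 1 /\ 0 <= qw (q k)) ->
  (forall k l, qmul (q k) (q l) = qmul (q l) (q k)) ->
  (forall k, meq (qmat (q k)) (x k)) -> path_conn n x (trivHom n).
Proof.
  intros Hu Hc Hm.
  apply (path_conn_of_quat n (fun t k => qsegment (q k) (1 - t)));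
    try (intro k; unfold qsegment; cbn; solve [cont]).
  - intros t k; destruct (Hu k); apply unit_qsegment_neq0; auto.
  - intros t _ k l; left; apply qsegment_commute, Hc.
  - intro k; replace (1 - 0) with 1 by ring; rewrite qsegment1.
    destruct (Hu k) as [HN _]; eapply meq_trans; [apply qrot_unit, HN|apply Hm].
  - intro k; replace (1 - 1) with 0 by ring; rewrite qsegment0.
    eapply meq_trans; [apply qrot_unit; quat_simpl; ring|apply qmat_one].
Qed.

Lemma path_by_conjugation (n : nat) (r : quat) (w : Fin.t n -> quat) (x y : Fin.t n -> Mat) :
  (forall t, qnorm2 (qsegment r t) <> 0) ->
  (forall k, qnorm2 (w k) <> 0) -> (forall k l, commute_up_to_sign (w k) (w l)) ->
  (forall k, meq (qrot (w k)) (x k)) -> (forall k, meq (qrot (qconjug r (w k))) (y k)) ->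
  path_conn n x y.
Proof.
  intros Hr Hn Hc H0 H1.
  apply (path_conn_of_quat n (fun t k => qconjug (qsegment r t) (w k)));
    try (intro k; unfold qconjug, qsegment; quat_simpl; solve [cont]).
  - intros t k; rewrite qnorm2_qconjug.
    pose proof (Hr t); pose proof (Hn k).
    repeat apply Rmult_integral_contrapositive_currified; auto.
  - intros t _ k l; apply qconjug_commute, Hc.
  - intro k; rewrite qsegment0, qconjug_one; apply H0.
  - intro k; rewrite qsegment1; apply H1.
Qed.

(** * Path components of Hom(Z^n, SO(3)) *)

Definition qbar (v : V) : quat :=
  match v with
  | (false, false) => qone | (false, true) => qI | (true, false) => qJ | (true, true) => qK
  end.

Lemma qnorm2_qbar (v : V) : qnorm2 (qbar v) = 1.
Proof. destruct v as [[|] [|]]; simpl qbar; quat_simpl; ring. Qed.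

Lemma qmat_qbar (v : V) : meq (qmat (qbar v)) (embQ v).
Proof. destruct v as [[|] [|]]; simpl qbar; mat_entries; unfold embQ, sgn; cbn; ring. Qed.

Lemma qrot_qbar (v : V) : meq (qrot (qbar v)) (embQ v).
Proof. eapply meq_trans; [apply qrot_unit, qnorm2_qbar|apply qmat_qbar]. Qed.

Lemma qbar_commute (v w : V) : commute_up_to_sign (qbar v) (qbar w).
Proof.
  destruct v as [[|] [|]], w as [[|] [|]]; simpl qbar;
    first [left; quat_ring | right; quat_ring].
Qed.

Lemma commute_qI_qJ (u : quat) : qnorm2 u = 1 ->
  commute_up_to_sign u qI -> commute_up_to_sign u qJ ->
  exists v, u = qbar v \/ u = qopp (qbar v).
Proof.
  intros HN H1 H2; destruct u as [a b c d].
  destruct H1 as [H1|H1], H2 as [H2|H2];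
  pose proof (f_equal qw H1) as E1; pose proof (f_equal qx H1) as E2;
  pose proof (f_equal qy H1) as E3; pose proof (f_equal qz H1) as E4;
  pose proof (f_equal qw H2) as F1; pose proof (f_equal qx H2) as F2;
  pose proof (f_equal qy H2) as F3; pose proof (f_equal qz H2) as F4;
  quat_simpl.
  - exists (false, false); assert (b = 0) by lra; assert (c = 0) by lra; assert (d = 0) by lra.
    subst; destruct (Rle_dec 0 a); [left|right]; apply quat_ext; cbn; nra.
  - exists (false, true); assert (a = 0) by lra; assert (c = 0) by lra; assert (d = 0) by lra.
    subst; destruct (Rle_dec 0 b); [left|right]; apply quat_ext; cbn; nra.
  - exists (true, false); assert (a = 0) by lra; assert (b = 0) by lra; assert (d = 0) by lra.
    subst; destruct (Rle_dec 0 c); [left|right]; apply quat_ext; cbn; nra.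
  - exists (true, true); assert (a = 0) by lra; assert (b = 0) by lra; assert (c = 0) by lra.
    subst; destruct (Rle_dec 0 d); [left|right]; apply quat_ext; cbn; nra.
Qed.

Lemma anticommute_pure (p q : quat) : qnorm2 p = 1 -> qnorm2 q = 1 ->
  qmul p q = qopp (qmul q p) ->
  qw p = 0 /\ qw q = 0 /\ qx p * qx q + qy p * qy q + qz p * qz q = 0.
Proof.
  intros Hp Hq H.
  pose proof (f_equal qw H) as Ew; pose proof (f_equal qx H) as Ex;
  pose proof (f_equal qy H) as Ey; pose proof (f_equal qz H) as Ez.
  destruct p as [a b c d], q as [e f g h]; quat_simpl.
  assert (a = 0) by (mul_by Ex f; mul_by Ey g; mul_by Ez h; mul_by Ew e; mul_by Hq a; lra).
  assert (e = 0) by (mul_by Ex b; mul_by Ey c; mul_by Ez d; mul_by Ew a; mul_by Hp e; lra).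
  subst; repeat split; lra.
Qed.

(* The rotation with columns u, u', u x u'. *)
Lemma frame_SO3 (a b c d e f : R) :
  a*a+b*b+c*c = 1 -> d*d+e*e+f*f = 1 -> a*d+b*e+c*f = 0 ->
  in_SO3 (mat3 a d (b*f - c*e) b e (c*d - a*f) c f (a*e - b*d)).
Proof.
  intros H1 H2 H3.
  assert (L : (b*f - c*e)*(b*f - c*e) + (c*d - a*f)*(c*d - a*f) + (a*e - b*d)*(a*e - b*d) = 1).
  { replace 1 with ((a*a+b*b+c*c)*(d*d+e*e+f*f) - (a*d+b*e+c*f)*(a*d+b*e+c*f))
      by (rewrite H1, H2, H3; ring).
    ring. }
  split.
  - apply meq_of_entries; unfold mmul, mtr, mid, mat3; cbn; try lra; ring_simplify; try lra; ring.
  - unfold mdet, mat3; cbn; rewrite <- L; ring.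
Qed.

(* Anticommuting unit quaternions are orthogonal pure quaternions. *)
Lemma anticommuting_frame (p p' : quat) : qnorm2 p = 1 -> qnorm2 p' = 1 ->
  qmul p p' = qopp (qmul p' p) ->
  exists r, qnorm2 r = 1 /\ 0 <= qw r /\ qconjug r p = qI /\ qconjug r p' = qJ.
Proof.
  intros Hp Hp' H.
  destruct (anticommute_pure p p' Hp Hp' H) as [Wp [Wp' D]].
  assert (Up : qx p * qx p + qy p * qy p + qz p * qz p = 1) by (unfold qnorm2 in Hp; nra).
  assert (Up' : qx p' * qx p' + qy p' * qy p' + qz p' * qz p' = 1) by (unfold qnorm2 in Hp'; nra).
  destruct (SO3_unit_lift _ (frame_SO3 _ _ _ _ _ _ Up Up' D)) as [r0 [Hr0 [Hw0 Hm0]]].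
  exists (qconj r0); rewrite qnorm2_conj; repeat split; auto.
  - rewrite qconjug_vector, !qmat_conj, qnorm2_conj, Hr0, Wp; unfold mtr; rewrite !Hm0.
    apply quat_ext; unfold mat3; cbn; lra.
  - rewrite qconjug_vector, !qmat_conj, qnorm2_conj, Hr0, Wp'; unfold mtr; rewrite !Hm0.
    apply quat_ext; unfold mat3; cbn; lra.
Qed.

Lemma HomSO3_classification (n : nat) (x : Fin.t n -> Mat) : in_HomSO3 n x ->
  path_conn n x (trivHom n) \/ exists b, path_conn n x (rightMap n b).
Proof.
  intro Hx; destruct (HomSO3_lift n x Hx) as [q [Hu Hc]].
  destruct (classic (forall k l, qmul (q k) (q l) = qmul (q l) (q k))) as [Hcomm|Hanti].
  { left; apply (path_to_trivial n q); intro k; destruct (Hu k) as (? & ? & ?); auto. }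
  right.
  apply not_all_ex_not in Hanti as [k Hanti]; apply not_all_ex_not in Hanti as [l Hanti].
  assert (Hkl : qmul (q k) (q l) = qopp (qmul (q l) (q k))) by (destruct (Hc k l); tauto).
  destruct (Hu k) as [Nk _], (Hu l) as [Nl _].
  destruct (anticommuting_frame _ _ Nk Nl Hkl) as (r & Nr & Wr & Ri & Rj).
  assert (Hb : forall m, exists v, meq (qrot (qconjug r (q m))) (embQ v)).
  { intro m; destruct (Hu m) as [Nm _].
    assert (Num : qnorm2 (qconjug r (q m)) = 1) by (rewrite qnorm2_qconjug, Nr, Nm; ring).
    destruct (commute_qI_qJ (qconjug r (q m)) Num) as [v [E|E]].
    - rewrite <- Ri; apply qconjug_commute, Hc.
    - rewrite <- Rj; apply qconjug_commute, Hc.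
    - exists v; rewrite E; apply qrot_qbar.
    - exists v; rewrite E; eapply meq_trans; [apply qrot_opp|apply qrot_qbar]. }
  destruct (choice (fun m v => meq (qrot (qconjug r (q m))) (embQ v)) Hb) as [b Hbm].
  exists b; apply (path_by_conjugation n r q); auto.
  - apply unit_qsegment_neq0; auto.
  - intro m; rewrite (proj1 (Hu m)); apply R1_neq_R0.
  - intro m; destruct (Hu m) as (Nm & _ & Mm); eapply meq_trans; [apply qrot_unit, Nm|exact Mm].
Qed.

(** * A trace invariant of path components *)

Definition mtrace (A : Mat) : R := A i0 i0 + A i1 i1 + A i2 i2.

Definition trace_sum (A B : Mat) : R := mtrace A + mtrace B + mtrace (mmul A B).

Lemma trace_sum_meq (A A' B B' : Mat) : meq A A' -> meq B B' -> trace_sum A B = trace_sum A' B'.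
Proof. intros HA HB; unfold trace_sum, mtrace, mmul; rewrite !HA, !HB; reflexivity. Qed.

Lemma mtrace_qmat (q : quat) : mtrace (qmat q) = 4 * (qw q * qw q) - qnorm2 q.
Proof. unfold mtrace, qmat, mat3, qnorm2; cbn; ring. Qed.

Lemma trace_sum_qmat (p q : quat) : qnorm2 p = 1 -> qnorm2 q = 1 ->
  trace_sum (qmat p) (qmat q) = 4 * (qw p * qw p + qw q * qw q + qw (qmul p q) * qw (qmul p q)) - 3.
Proof.
  intros Hp Hq; unfold trace_sum.
  replace (mtrace (mmul (qmat p) (qmat q))) with (mtrace (qmat (qmul p q)))
    by (unfold mtrace; rewrite !qmat_mul; reflexivity).
  rewrite !mtrace_qmat, qnorm2_mul, Hp, Hq; ring.
Qed.

Lemma commuting_real_parts (p q : quat) : qnorm2 p = 1 -> qnorm2 q = 1 -> qmul p q = qmul q p ->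
  qw p * qw p + qw q * qw q + qw (qmul p q) * qw (qmul p q) >= 1/4.
Proof.
  intros Hp Hq H.
  pose proof (f_equal qx H) as Ex; pose proof (f_equal qy H) as Ey; pose proof (f_equal qz H) as Ez.
  destruct p as [a b c d], q as [e f g h]; quat_simpl.
  set (s := b*f + c*g + d*h).
  (* The vector parts are parallel, so |v.v'|^2 = |v|^2 |v'|^2 = (1 - a^2)(1 - e^2). *)
  assert (Hs : s * s = (1 - a*a) * (1 - e*e)).
  { replace ((1 - a*a) * (1 - e*e)) with ((b*b+c*c+d*d) * (f*f+g*g+h*h)) by nra.
    replace ((b*b+c*c+d*d) * (f*f+g*g+h*h)) with
      (s*s + (c*h-d*g)*(c*h-d*g) + (d*f-b*h)*(d*f-b*h) + (b*g-c*f)*(b*g-c*f)) by (unfold s; ring).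
    replace (c*h-d*g) with 0 by lra; replace (d*f-b*h) with 0 by lra; replace (b*g-c*f) with 0 by lra.
    ring. }
  replace (a * e - b * f - c * g - d * h) with (a * e - s) by (unfold s; ring).
  assert (a * a <= 1) by nra; assert (e * e <= 1) by nra.
  clearbody s; nra.
Qed.

Lemma anticommuting_real_parts (p q : quat) : qnorm2 p = 1 -> qnorm2 q = 1 ->
  qmul p q = qopp (qmul q p) ->
  qw p * qw p + qw q * qw q + qw (qmul p q) * qw (qmul p q) = 0.
Proof.
  intros Hp Hq H; destruct (anticommute_pure p q Hp Hq H) as [Wp [Wq D]].
  destruct p as [a b c d], q as [e f g h]; quat_simpl; cbn in *; subst; nra.
Qed.

Lemma trace_sum_gap (A B : Mat) : in_SO3 A -> in_SO3 B -> meq (mmul A B) (mmul B A) ->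
  trace_sum A B = -3 \/ trace_sum A B >= -2.
Proof.
  intros HA HB HC.
  destruct (SO3_unit_lift A HA) as [p [Np [_ Mp]]], (SO3_unit_lift B HB) as [q [Nq [_ Mq]]].
  assert (Hpq : commute_up_to_sign p q).
  { apply qmat_commute_lift; auto.
    apply (commute_meq A _ B); [apply meq_sym; exact Mp|apply meq_sym; exact Mq|exact HC]. }
  rewrite <- (trace_sum_meq _ _ _ _ Mp Mq), trace_sum_qmat by auto.
  destruct Hpq as [H|H].
  - pose proof (commuting_real_parts p q Np Nq H); right; lra.
  - rewrite (anticommuting_real_parts p q Np Nq H); left; ring.
Qed.

Lemma continuous_gap (f : R -> R) (a b : R) : continuity f -> a < b ->
  (forall t, 0 <= t <= 1 -> f t <= a \/ b <= f t) -> (f 0 <= a <-> f 1 <= a).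
Proof.
  intros Hf Hab Hgap.
  assert (Hcross : forall g : R -> R, continuity g -> g 0 < 0 -> 0 < g 1 ->
                   exists t, 0 <= t <= 1 /\ g t = 0).
  { intros g Hg H0 H1; destruct (IVT g 0 1 Hg ltac:(lra) H0 H1) as [t Ht]; exists t; exact Ht. }
  destruct (Hgap 0 ltac:(lra)), (Hgap 1 ltac:(lra)); split; intro; try lra; exfalso.
  - destruct (Hcross (fun t => f t - (a + b) / 2)) as [t [Ht Et]];
      [apply cont_minus; [exact Hf|apply cont_const]|lra|lra|].
    destruct (Hgap t Ht); lra.
  - destruct (Hcross (fun t => (a + b) / 2 - f t)) as [t [Ht Et]];
      [apply cont_minus; [apply cont_const|exact Hf]|lra|lra|].
    destruct (Hgap t Ht); lra.
Qed.

Lemma path_conn_trace_sum (n : nat) (x y : Fin.t n -> Mat) (k l : Fin.t n) : path_conn n x y ->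
  (trace_sum (x k) (x l) <= -3 <-> trace_sum (y k) (y l) <= -3).
Proof.
  intros [g (Hc & Hh & H0 & H1)].
  rewrite <- (trace_sum_meq _ _ _ _ (H0 k) (H0 l)), <- (trace_sum_meq _ _ _ _ (H1 k) (H1 l)).
  apply (continuous_gap (fun t => trace_sum (g t k) (g t l)) (-3) (-2)); [|lra|].
  - unfold trace_sum, mtrace, mmul; repeat first [apply Hc | apply cont_plus | apply cont_mult].
  - intros t Ht; destruct (Hh t Ht) as [HS HC].
    destruct (trace_sum_gap (g t k) (g t l)); auto; lra.
Qed.

Lemma qrot_qconjug_qbar (r : quat) (v w : V) : qnorm2 r <> 0 ->
  qconjug r (qbar v) = qscale (qnorm2 r) (qbar w) \/
  qconjug r (qbar v) = qscale (qnorm2 r) (qopp (qbar w)) ->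
  meq (qrot (qconjug r (qbar v))) (embQ w).
Proof.
  intros Hr [E|E]; rewrite E.
  - eapply meq_trans; [apply qrot_scale; [exact Hr|rewrite qnorm2_qbar; lra]|apply qrot_qbar].
  - eapply meq_trans; [apply qrot_scale; [exact Hr|rewrite qnorm2_opp, qnorm2_qbar; lra]|].
    eapply meq_trans; [apply qrot_opp|apply qrot_qbar].
Qed.

Ltac conjugation_witness r :=
  exists r; split; [reflexivity|];
  intros [[|] [|]];
  repeat match goal with H : ?f (?a, ?b) = (_, _) |- context [?f (?a, ?b)] => rewrite H end;
  (apply qrot_qconjug_qbar; [quat_simpl; lra|]);
  unfold qconjug; simpl qbar; first [left; quat_ring | right; quat_ring].

(* Each element of Sigma_3 is induced by conjugation with one of 1, 1+i, 1+j, 1+k, 1+i+j+k,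
   1-i-j-k, which permute {+-i, +-j, +-k} accordingly. *)
Lemma Sigma3_by_conjugation (s : V -> V) : in_Sigma3 s ->
  exists r, qw r = 1 /\ forall v, meq (qrot (qconjug r (qbar v))) (embQ (s v)).
Proof.
  intros [Hi H0].
  assert (Hne : forall v w, v <> w -> s v <> s w) by (intros v w Hvw E; apply Hvw, Hi, E).
  pose proof (Hne (false, true) (true, false) ltac:(discriminate)) as D1.
  pose proof (Hne (false, true) (true, true) ltac:(discriminate)) as D2.
  pose proof (Hne (true, false) (true, true) ltac:(discriminate)) as D3.
  pose proof (Hne (false, true) V0 ltac:(discriminate)) as D4.
  pose proof (Hne (true, false) V0 ltac:(discriminate)) as D5.
  pose proof (Hne (true, true) V0 ltac:(discriminate)) as D6.
  rewrite H0 in D4, D5, D6; unfold V0 in *.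
  destruct (s (false, true)) as [[|] [|]] eqn:EI, (s (true, false)) as [[|] [|]] eqn:EJ,
    (s (true, true)) as [[|] [|]] eqn:EK; try congruence.
  all: first
    [ conjugation_witness qone | conjugation_witness (Quat 1 0 0 1)
    | conjugation_witness (Quat 1 1 0 0) | conjugation_witness (Quat 1 0 1 0)
    | conjugation_witness (Quat 1 1 1 1) | conjugation_witness (Quat 1 (-1) (-1) (-1)) ].
Qed.

Lemma rightMap_sigma_orbit (n : nat) (b b' : Fin.t n -> V) :
  sigma_orbit n b b' -> path_conn n (rightMap n b) (rightMap n b').
Proof.
  intros [s [Hs Hb]]; destruct (Sigma3_by_conjugation s Hs) as [r [Hr Hv]].
  apply (path_by_conjugation n r (fun k => qbar (b k))).
  - apply qsegment_neq0; left; exact Hr.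
  - intro k; rewrite qnorm2_qbar; apply R1_neq_R0.
  - intros; apply qbar_commute.
  - intro k; apply qrot_qbar.
  - intro k; unfold rightMap; rewrite Hb; apply Hv.
Qed.

Lemma rightMap_HomSO3 (n : nat) (b : Fin.t n -> V) : in_HomSO3 n (rightMap n b).
Proof.
  apply (HomSO3_of_quat n (fun k => qbar (b k))).
  - intro k; rewrite qnorm2_qbar; apply R1_neq_R0.
  - intros; apply qbar_commute.
  - intro k; apply qrot_qbar.
Qed.

Lemma trivHom_HomSO3 (n : nat) : in_HomSO3 n (trivHom n).
Proof.
  apply (HomSO3_of_quat n (fun _ => qone)).
  - intro k; quat_simpl; lra.
  - intros; left; reflexivity.
  - intro k; eapply meq_trans; [apply qrot_unit; quat_simpl; ring|apply qmat_one].
Qed.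

Lemma rightMap_topMap_trivial (n : nat) (a : Fin.t n -> bool) :
  path_conn n (rightMap n (topMap n a)) (trivHom n).
Proof.
  apply (path_to_trivial n (fun k => qbar (incl (a k)))).
  - intro k; split; [apply qnorm2_qbar|]; destruct (a k); cbn; lra.
  - intros k l; destruct (a k), (a l); simpl; quat_ring.
  - intro k; apply qmat_qbar.
Qed.

(** * Sigma_3-orbits in Hom(Z^n, (Z/2)^2) *)

Definition veqb (v w : V) : bool := Bool.eqb (fst v) (fst w) && Bool.eqb (snd v) (snd w).

Definition basis_pair (v w : V) : bool :=
  negb (veqb v V0) && negb (veqb w V0) && negb (veqb v w).

Lemma trace_sum_embQ (v w : V) : trace_sum (embQ v) (embQ w) <= -3 <-> basis_pair v w = true.
Proof.
  destruct v as [[|] [|]], w as [[|] [|]];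
    unfold trace_sum, mtrace, mmul, embQ, sgn; cbn; split; intro; (lra || discriminate || reflexivity).
Qed.

Lemma trace_sum_mid : trace_sum mid mid = 9.
Proof. unfold trace_sum, mtrace, mmul, mid; cbn; ring. Qed.

(* The linear automorphism of (Z/2)^2 sending the basis (x, y) to (x', y'). *)
Definition basis_change (x y x' y' v : V) : V :=
  if veqb v x then x' else if veqb v y then y'
  else if veqb v V0 then V0 else (xorb (fst x') (fst y'), xorb (snd x') (snd y')).

Lemma basis_change_Sigma3 (x y x' y' : V) : basis_pair x y = true -> basis_pair x' y' = true ->
  in_Sigma3 (basis_change x y x' y').
Proof.
  destruct x as [[|] [|]], y as [[|] [|]], x' as [[|] [|]], y' as [[|] [|]];
    intros H H'; try discriminate; split; try reflexivity;
    intros [[|] [|]] [[|] [|]]; cbn; intro E; (reflexivity || discriminate).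
Qed.

(* A vector is determined by which of the basis vectors x, y it forms a basis with. *)
Lemma basis_change_pattern (x y x' y' m m' : V) :
  basis_pair x y = true -> basis_pair x' y' = true ->
  basis_pair m x = basis_pair m' x' -> basis_pair m y = basis_pair m' y' ->
  m' = basis_change x y x' y' m.
Proof.
  destruct x as [[|] [|]], y as [[|] [|]], x' as [[|] [|]], y' as [[|] [|]];
    intros H H'; try discriminate;
    destruct m as [[|] [|]], m' as [[|] [|]]; cbn; intros E1 E2; (reflexivity || discriminate).
Qed.

Definition swap_e1 (v x : V) : V :=
  if veqb x v then (true, false) else if veqb x (true, false) then v else x.

Lemma swap_e1_Sigma3 (v : V) : v <> V0 -> in_Sigma3 (swap_e1 v).
Proof.
  destruct v as [[|] [|]]; intro Hv; try (exfalso; apply Hv; reflexivity); split; try reflexivity;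
    intros [[|] [|]] [[|] [|]]; cbn; intro E; (reflexivity || discriminate).
Qed.

Lemma swap_e1_incl (v x : V) : v <> V0 -> basis_pair x v = false -> swap_e1 v x = incl (fst (swap_e1 v x)).
Proof.
  destruct v as [[|] [|]], x as [[|] [|]]; intros Hv E; cbn in *;
    (reflexivity || discriminate || (exfalso; apply Hv; reflexivity)).
Qed.

Lemma sigma_orbit_of_pattern (n : nat) (b b' : Fin.t n -> V) (k l : Fin.t n) :
  basis_pair (b k) (b l) = true ->
  (forall m m', basis_pair (b m) (b m') = basis_pair (b' m) (b' m')) -> sigma_orbit n b b'.
Proof.
  intros Hkl Hpat.
  assert (Hkl' : basis_pair (b' k) (b' l) = true) by (rewrite <- Hpat; exact Hkl).
  exists (basis_change (b k) (b l) (b' k) (b' l)); split.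
  - apply basis_change_Sigma3; assumption.
  - intro m; apply basis_change_pattern; auto.
Qed.

Lemma sigma_orbit_topMap (n : nat) (b : Fin.t n -> V) :
  (forall k l, basis_pair (b k) (b l) = false) -> exists a, sigma_orbit n b (topMap n a).
Proof.
  intro Hpat; destruct (classic (exists m, b m <> V0)) as [[m Hm]|Hzero].
  - exists (fun k => fst (swap_e1 (b m) (b k))), (swap_e1 (b m)); split.
    + apply swap_e1_Sigma3, Hm.
    + intro k; unfold topMap; symmetry; apply swap_e1_incl; auto.
  - exists (fun _ => false), (fun v => v); split.
    + split; auto.
    + intro k; apply NNPP; intro Hk; apply Hzero; exists k; intro E; apply Hk; rewrite E; reflexivity.
Qed.

(** * The push-out property *)

Section QuotientLift.

Variables (X B Z : Type) (E : relation X) (r : B -> X) (p : X) (g : B -> Z) (z : Z).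

Let Eq := clos_refl_sym_trans X E.

Hypothesis g_compat : forall b b', Eq (r b) (r b') -> g b = g b'.
Hypothesis g_base : forall b, Eq (r b) p -> g b = z.

(* Points outside the classes of r and p are sent to z as well; any value would do. *)
Definition quotient_lift (x : X) : Z :=
  match excluded_middle_informative (exists b, Eq x (r b)) with
  | left H => g (proj1_sig (constructive_indefinite_description _ H))
  | right _ => z
  end.

Lemma quotient_lift_r (x : X) (b : B) : Eq x (r b) -> quotient_lift x = g b.
Proof.
  intro H; unfold quotient_lift; destruct excluded_middle_informative as [e|e];
    [|exfalso; apply e; exists b; exact H].
  destruct (constructive_indefinite_description _ e) as [b' Hb']; cbn.
  apply g_compat; apply rst_trans with x; [apply rst_sym|]; assumption.
Qed.

Lemma quotient_lift_p (x : X) : Eq x p -> quotient_lift x = z.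
Proof.
  intro H; unfold quotient_lift; destruct excluded_middle_informative as [e|e]; [|reflexivity].
  destruct (constructive_indefinite_description _ e) as [b' Hb']; cbn.
  apply g_base; apply rst_trans with x; [apply rst_sym|]; assumption.
Qed.

Lemma quotient_lift_compat (x y : X) : E x y -> quotient_lift x = quotient_lift y.
Proof.
  intro H; destruct (classic (exists b, Eq x (r b))) as [[b Hb]|Hn].
  - rewrite (quotient_lift_r x b Hb); symmetry; apply quotient_lift_r.
    apply rst_trans with x; [apply rst_sym, rst_step, H|exact Hb].
  - assert (Hn' : ~ exists b, Eq y (r b)).
    { intros [b Hb]; apply Hn; exists b; apply rst_trans with y; [apply rst_step, H|exact Hb]. }
    unfold quotient_lift; do 2 (destruct excluded_middle_informative; try contradiction); reflexivity.
Qed.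

End QuotientLift.

Lemma connected_trace_sum (n : nat) (x y : Fin.t n -> Mat) (k l : Fin.t n) :
  clos_refl_sym_trans _ (path_conn n) x y ->
  (trace_sum (x k) (x l) <= -3 <-> trace_sum (y k) (y l) <= -3).
Proof.
  induction 1 as [x y H| | |]; [apply path_conn_trace_sum, H|tauto|tauto|tauto].
Qed.

Lemma rightMap_connected_pattern (n : nat) (b b' : Fin.t n -> V) :
  clos_refl_sym_trans _ (path_conn n) (rightMap n b) (rightMap n b') ->
  forall k l, basis_pair (b k) (b l) = basis_pair (b' k) (b' l).
Proof.
  intros H k l; pose proof (connected_trace_sum n _ _ k l H) as I.
  unfold rightMap in I; rewrite !trace_sum_embQ in I; apply Bool.eq_true_iff_eq, I.
Qed.

Lemma trivHom_connected_pattern (n : nat) (b : Fin.t n -> V) :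
  clos_refl_sym_trans _ (path_conn n) (rightMap n b) (trivHom n) ->
  forall k l, basis_pair (b k) (b l) = false.
Proof.
  intros H k l; pose proof (connected_trace_sum n _ _ k l H) as I.
  unfold rightMap, trivHom in I; rewrite trace_sum_embQ, trace_sum_mid in I.
  destruct (basis_pair (b k) (b l)); [|reflexivity].
  exfalso; apply (Rle_not_lt (-3) 9); [apply I; reflexivity|lra].
Qed.

Section Descent.

Variables (n : nat) (Z : Type) (g : (Fin.t n -> V) -> Z) (z : Z).
Hypothesis g_orbit : forall b b', sigma_orbit n b b' -> g b = g b'.
Hypothesis g_topMap : forall a, g (topMap n a) = z.

Lemma descent_trivial_pattern (b : Fin.t n -> V) :
  (forall k l, basis_pair (b k) (b l) = false) -> g b = z.
Proof.
  intro Hpat; destruct (sigma_orbit_topMap n b Hpat) as [a Ha].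
  rewrite (g_orbit _ _ Ha); apply g_topMap.
Qed.

Lemma descent_rightMap (b b' : Fin.t n -> V) :
  clos_refl_sym_trans _ (path_conn n) (rightMap n b) (rightMap n b') -> g b = g b'.
Proof.
  intro H; pose proof (rightMap_connected_pattern n b b' H) as Hpat.
  destruct (classic (exists k l, basis_pair (b k) (b l) = true)) as [[k [l Hkl]]|Hn].
  - apply g_orbit, (sigma_orbit_of_pattern n b b' k l Hkl Hpat).
  - assert (Hb : forall k l, basis_pair (b k) (b l) = false)
      by (intros k l; apply Bool.not_true_is_false; intro; apply Hn; eauto).
    rewrite !descent_trivial_pattern; auto.
    intros k l; rewrite <- Hpat; apply Hb.
Qed.

Lemma descent_trivHom (b : Fin.t n -> V) :
  clos_refl_sym_trans _ (path_conn n) (rightMap n b) (trivHom n) -> g b = z.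
Proof. intro H; apply descent_trivial_pattern, (trivHom_connected_pattern n b H). Qed.

End Descent.

Theorem mainTheorem8 (n : nat) :
  (forall b, in_HomSO3 n (rightMap n b)) /\
  (forall b b', sigma_orbit n b b' -> path_conn n (rightMap n b) (rightMap n b')) /\
  in_HomSO3 n (trivHom n) /\
  (forall a, path_conn n (rightMap n (topMap n a)) (trivHom n)) /\
  (forall (Z : Type) (g : (Fin.t n -> V) -> Z) (z : Z),
     (forall b b', sigma_orbit n b b' -> g b = g b') ->
     (forall a, g (topMap n a) = z) ->
     exists h : (Fin.t n -> Mat) -> Z,
       (forall x y, path_conn n x y -> h x = h y) /\
       (forall b, h (rightMap n b) = g b) /\
       h (trivHom n) = z /\
       (forall h' : (Fin.t n -> Mat) -> Z,
          (forall x y, path_conn n x y -> h' x = h' y) ->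
          (forall b, h' (rightMap n b) = g b) ->
          h' (trivHom n) = z ->
          forall x, in_HomSO3 n x -> h' x = h x)).
Proof.
  split; [apply rightMap_HomSO3|]; split; [apply rightMap_sigma_orbit|].
  split; [apply trivHom_HomSO3|]; split; [apply rightMap_topMap_trivial|].
  intros Z g z Hg Hz.
  pose proof (descent_rightMap n Z g z Hg Hz) as Hcompat.
  pose proof (descent_trivHom n Z g z Hg Hz) as Hbase.
  set (h := quotient_lift _ _ _ (path_conn n) (rightMap n) g z).
  pose proof (quotient_lift_r _ _ _ _ _ g z Hcompat) as Hr.
  pose proof (quotient_lift_p _ _ _ _ _ _ g z Hbase) as Hp.
  exists h; split; [exact (quotient_lift_compat _ _ _ _ _ g z Hcompat)|].
  split; [intro b; apply Hr, rst_refl|]; split; [apply Hp, rst_refl|].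
  intros h' H'c H'r H'p x Hx.
  destruct (HomSO3_classification n x Hx) as [P|[b P]].
  - rewrite (H'c _ _ P), H'p; symmetry; apply Hp, rst_step, P.
  - rewrite (H'c _ _ P), H'r; symmetry; apply Hr, rst_step, P.
Qed.
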